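(* Let $(X,d)$ be a nonempty complete and rectifiably path-connected metric space and let $F:X\rightarrow K(X)$ be a set-valued uniform pointwise contraction with modulus $\beta\in[0,1)$. Then $\mathrm{Fix}(F)\neq\varnothing$.
   Context: $\Pi$ is the set of finite partitions $0=t_0<\cdots<t_n=1$ of $[0,1]$; the length of a continuous path $p:[0,1]\to X$ is $l(p)=\sup_{\pi\in\Pi}\sum_{i=1}^n d(p(t_{i-1}),p(t_i))$. $X$ is rectifiably path-connected if every two points $x,y$ are joined by a continuous path $p$ with $p(0)=x$, $p(1)=y$, $l(p)<\infty$. $K(X)$ is the set of nonempty compact subsets of $X$; $H$ is the Hausdorff distance. $F$ is a set-valued uniform pointwise contraction with modulus $\beta$ if every $x\in X$ has an open neighborhood $N(x)$ with $H(F(x),F(y))\le\beta\, d(x,y)$ for all $y\in N(x)$. $\mathrm{Fix}(F)=\{x:x\in F(x)\}$. *)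

From Stdlib Require Import Reals List.
From Coquelicot Require Import Coquelicot.
Open Scope R_scope.

Section MetricDefs.
Context {X : Type} (d : X -> X -> R).

Definition is_metric : Prop :=
  (forall x y, d x y = 0 <-> x = y) /\
  (forall x y, d x y = d y x) /\
  (forall x y z, d x z <= d x y + d y z).

Definition cauchy_seq (u : nat -> X) : Prop :=
  forall eps, 0 < eps -> exists N, forall m n, (N <= m)%nat -> (N <= n)%nat -> d (u m) (u n) < eps.

Definition converges_to (u : nat -> X) (l : X) : Prop :=
  forall eps, 0 < eps -> exists N, forall n, (N <= n)%nat -> d (u n) l < eps.

Definition complete_metric : Prop :=
  forall u, cauchy_seq u -> exists l, converges_to u l.

Definition open_set (U : X -> Prop) : Prop :=
  forall x, U x -> exists eps, 0 < eps /\ forall y, d x y < eps -> U y.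

Definition compact_set (K : X -> Prop) : Prop :=
  forall (I : Type) (U : I -> X -> Prop),
    (forall i, open_set (U i)) ->
    (forall x, K x -> exists i, U i x) ->
    exists l : list I, forall x, K x -> exists i, In i l /\ U i x.

Definition nonempty_compact (K : X -> Prop) : Prop :=
  (exists x, K x) /\ compact_set K.

Definition pt_set_dist (x : X) (B : X -> Prop) : R :=
  real (Glb_Rbar (fun r => exists b, B b /\ r = d x b)).

Definition hausdorff (A B : X -> Prop) : Rbar :=
  Lub_Rbar (fun r => (exists a, A a /\ r = pt_set_dist a B) \/
                     (exists b, B b /\ r = pt_set_dist b A)).

Definition set_valued_upc (F : X -> X -> Prop) (beta : R) : Prop :=
  forall x, exists N : X -> Prop, open_set N /\ N x /\
    forall y, N y -> Rbar_le (hausdorff (F x) (F y)) (Finite (beta * d x y)).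

(* continuous path p : [0,1] -> X (values outside [0,1] are irrelevant) *)
Definition continuous_path (p : R -> X) : Prop :=
  forall t, 0 <= t <= 1 -> forall eps, 0 < eps -> exists delta, 0 < delta /\
    forall s, 0 <= s <= 1 -> Rabs (s - t) < delta -> d (p s) (p t) < eps.

Definition is_partition (n : nat) (t : nat -> R) : Prop :=
  (1 <= n)%nat /\ t 0%nat = 0 /\ t n = 1 /\ forall i, (i < n)%nat -> t i < t (S i).

Definition partition_sum (p : R -> X) (n : nat) (t : nat -> R) : R :=
  sum_f_R0 (fun i => d (p (t i)) (p (t (S i)))) (n - 1).

Definition path_length (p : R -> X) : Rbar :=
  Lub_Rbar (fun r => exists n t, is_partition n t /\ r = partition_sum p n t).

Definition rectifiably_path_connected : Prop :=
  forall x y, exists p : R -> X, continuous_path p /\ p 0 = x /\ p 1 = y /\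
    Rbar_lt (path_length p) p_infty.

End MetricDefs.

From Stdlib Require Import Reals Lra Lia List ZArith Cantor.
From Stdlib Require Import Classical ClassicalEpsilon IndefiniteDescription.
From Coquelicot Require Import Coquelicot.
Open Scope R_scope.

(* A path p : [0,1] -> X is controlled by a continuous lam when d (p u) (p v) <= lam v - lam u
   for u <= v; the arc length of a rectifiable path is such a control.  Because F is a local
   contraction, real induction along [s, t] shows that every z in F (p s) has a point of F (p t)
   within beta (lam t - lam s).  Choosing such points on the dyadic grids, extracting a diagonal
   subsequence (the values of F are compact) and extending by completeness lifts p to a path q
   with q 0 = z, q 1 in F (p 1), controlled by beta lam.  Starting from a path from x0 to some
   x1 in F x0 and lifting repeatedly yields x (n+1) in F (x n) with d (x n) (x (n+1)) <= beta^n L,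
   a Cauchy sequence; at its limit F is again a local contraction, so the limit lies in its own
   (closed) image. *)

Lemma dependent_choice {A : Type} (P : nat -> A -> Prop) (Rel : nat -> A -> A -> Prop) (a0 : A) :
  P 0%nat a0 -> (forall n a, P n a -> exists b, P (S n) b /\ Rel n a b) ->
  exists f : nat -> A, f 0%nat = a0 /\ forall n, P n (f n) /\ Rel n (f n) (f (S n)).
Proof.
  intros H0 Hstep.
  set (next := fun n a => epsilon (inhabits a0) (fun b => P (S n) b /\ Rel n a b)).
  set (f := fix f n := match n with 0%nat => a0 | S n' => next n' (f n') end).
  assert (Hnext : forall n, P n (f n) -> P (S n) (f (S n)) /\ Rel n (f n) (f (S n)))
    by (intros n Hn; apply epsilon_spec, Hstep, Hn).
  assert (Hf : forall n, P n (f n)) by (induction n; [exact H0 | apply Hnext, IHn]).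
  exists f. split; [reflexivity|]. intros n. split; [apply Hf | apply Hnext, Hf].
Qed.

Lemma extend_along_injection {I T Y : Type} (P : I -> Prop) (f : I -> T) (g : I -> Y)
  (K : T -> Y -> Prop) :
  (forall t, exists y, K t y) -> (forall i j, P i -> P j -> f i = f j -> i = j) ->
  (forall i, P i -> K (f i) (g i)) ->
  exists G : T -> Y, (forall t, K t (G t)) /\ forall i, P i -> G (f i) = g i.
Proof.
  intros Hne Hinj Hg.
  destruct (functional_choice (fun t y => K t y /\ forall i, P i -> f i = t -> y = g i)) as [G HG].
  - intros t. destruct (classic (exists i, P i /\ f i = t)) as [[i [Hi <-]]|Hno].
    + exists (g i). split; [apply Hg, Hi|].
      intros j Hj Hij. rewrite (Hinj j i Hj Hi Hij). reflexivity.
    + destruct (Hne t) as [y Hy]. exists y. split; [exact Hy|].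
      intros i Hi Hit. exfalso. apply Hno. exists i. auto.
  - exists G. split; [apply HG|]. intros i Hi. apply (proj2 (HG (f i)) i Hi eq_refl).
Qed.

Lemma Lub_Rbar_finite (E : R -> Prop) (B : R) :
  (exists x, E x) -> (forall x, E x -> x <= B) ->
  (forall x, E x -> x <= real (Lub_Rbar E)) /\
  (forall B', (forall x, E x -> x <= B') -> real (Lub_Rbar E) <= B').
Proof.
  intros [x0 Hx0] HB. destruct (Lub_Rbar_correct E) as [Hub Hlub].
  assert (H1 : Rbar_le x0 (Lub_Rbar E)) by (apply Hub; exact Hx0).
  assert (H2 : Rbar_le (Lub_Rbar E) B) by (apply Hlub; intros x Hx; apply HB, Hx).
  destruct (Lub_Rbar E) as [l| |]; simpl in *; try contradiction.
  split; [exact Hub|]. intros B' HB'. exact (Hlub (Finite B') HB').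
Qed.

Lemma eventually_inv_pow2_lt (e : R) :
  0 < e -> exists N : nat, forall n, (N <= n)%nat -> / 2 ^ n < e.
Proof.
  intros He.
  destruct (pow_lt_1_zero (/ 2)) with (y := e) as [N HN]; [rewrite Rabs_right; lra | exact He |].
  exists N. intros n Hn. specialize (HN n Hn).
  rewrite <- pow_inv. rewrite Rabs_right in HN; [exact HN|]. apply Rle_ge, pow_le. lra.
Qed.

Lemma Rabs_diff_perturb x x' y y' e :
  Rabs (x' - x) < e / 2 -> Rabs (y' - y) < e / 2 -> Rabs (y' - x') <= Rabs (y - x) + e.
Proof.
  intros Hx Hy.
  replace (y' - x') with ((y' - y) + ((y - x) + (x - x'))) by ring.
  pose proof (Rabs_triang (y' - y) ((y - x) + (x - x'))).
  pose proof (Rabs_triang (y - x) (x - x')). rewrite Rabs_minus_sym in Hx. lra.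
Qed.

Lemma inv_pow2_pos (n : nat) : 0 < / 2 ^ n.
Proof. apply Rinv_0_lt_compat, pow_lt. lra. Qed.

Lemma increasing_ge_id (phi : nat -> nat) :
  (forall n, (phi n < phi (S n))%nat) -> forall n, (n <= phi n)%nat.
Proof. intros H n. induction n; [lia|]. specialize (H n). lia. Qed.

Lemma increasing_lt (phi : nat -> nat) :
  (forall n, (phi n < phi (S n))%nat) -> forall a b, (a < b)%nat -> (phi a < phi b)%nat.
Proof.
  intros H a b Hab. induction Hab as [|b Hab IH]; [apply H|]. specialize (H b). lia.
Qed.

Lemma real_induction (Q : R -> Prop) (a b : R) : a <= b -> Q a ->
  (forall c, a <= c <= b -> exists del, 0 < del /\ forall v, a <= v <= b -> Rabs (v - c) < del ->
     (c <= v -> Q c -> Q v) /\ (v <= c -> Q v -> Q c)) ->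
  Q b.
Proof.
  intros Hab Qa Hloc.
  set (E := fun u => a <= u <= b /\ forall v, a <= v <= u -> Q v).
  assert (Ea : E a) by (split; [lra|]; intros v Hv; replace v with a by lra; exact Qa).
  destruct (completeness E) as [T [HTub HTlub]];
    [exists b; intros x [Hx _]; lra | exists a; exact Ea |].
  assert (HaT : a <= T) by (apply HTub; exact Ea).
  assert (HTb : T <= b) by (apply HTlub; intros x [Hx _]; lra).
  assert (below : forall v, a <= v < T -> Q v).
  { intros v Hv. apply NNPP. intros HQ.
    assert (T <= v); [|lra].
    apply HTlub. intros x [Hx Hxq]. apply Rnot_lt_le. intros Hlt. apply HQ, Hxq. lra. }
  destruct (Hloc T (conj HaT HTb)) as [del [Hdel Hnear]].
  assert (QT : Q T).
  { destruct (Rle_lt_or_eq_dec a T HaT) as [HaT' | <-]; [|exact Qa].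
    set (v := Rmax a (T - del / 2)).
    assert (Hv1 : a <= v) by apply Rmax_l.
    assert (Hv2 : T - del / 2 <= v) by apply Rmax_r.
    assert (Hv3 : v < T) by (apply Rmax_lub_lt; lra).
    apply (proj2 (Hnear v ltac:(lra) ltac:(rewrite Rabs_left1; lra))); [lra|].
    apply below. lra. }
  destruct (Rle_lt_or_eq_dec T b HTb) as [HTb' | <-]; [exfalso|exact QT].
  set (v := Rmin b (T + del / 2)).
  assert (Hv1 : v <= b) by apply Rmin_l.
  assert (Hv2 : v <= T + del / 2) by apply Rmin_r.
  assert (Hv3 : T < v) by (apply Rmin_glb_lt; lra).
  assert (Ev : E v); [|pose proof (HTub v Ev); lra].
  split; [lra|]. intros w Hw. destruct (Rle_dec w T) as [HwT|HwT].
  - destruct (Rle_lt_or_eq_dec w T HwT) as [HwT' | ->]; [apply below; lra|exact QT].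
  - apply (proj1 (Hnear w ltac:(lra) ltac:(rewrite Rabs_right; lra))); [lra|exact QT].
Qed.

Definition continuous_on_unit (f : R -> R) : Prop :=
  forall t, 0 <= t <= 1 -> forall e, 0 < e -> exists del, 0 < del /\
    forall s, 0 <= s <= 1 -> Rabs (s - t) < del -> Rabs (f s - f t) < e.

Lemma continuous_on_unit_scale (c : R) (f : R -> R) :
  continuous_on_unit f -> continuous_on_unit (fun t => c * f t).
Proof.
  intros Hf t Ht e He. pose proof (Rabs_pos c) as Hc.
  destruct (Hf t Ht (e / (Rabs c + 1))) as [del [Hdel Hd]];
    [apply Rdiv_lt_0_compat; lra|].
  exists del. split; [exact Hdel|]. intros s Hs Hst.
  rewrite <- Rmult_minus_distr_l, Rabs_mult.
  specialize (Hd s Hs Hst). pose proof (Rabs_pos (f s - f t)).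
  apply Rle_lt_trans with ((Rabs c + 1) * Rabs (f s - f t)); [nra|].
  apply Rmult_lt_reg_l with (/ (Rabs c + 1)); [apply Rinv_0_lt_compat; lra|].
  rewrite <- Rmult_assoc, Rinv_l, Rmult_1_l by lra. unfold Rdiv in Hd. lra.
Qed.

(** * Dyadic grids *)

Definition dyadic (n i : nat) : R := INR i / 2 ^ n.

Lemma INR_pow2 n : INR (2 ^ n) = 2 ^ n.
Proof. rewrite pow_INR. reflexivity. Qed.

Lemma dyadic_nonneg n i : 0 <= dyadic n i.
Proof. unfold dyadic. apply Rdiv_le_0_compat; [apply pos_INR | apply pow_lt; lra]. Qed.

Lemma dyadic_le n i j : (i <= j)%nat -> dyadic n i <= dyadic n j.
Proof.
  intros H. unfold dyadic, Rdiv.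
  apply Rmult_le_compat_r; [left; apply inv_pow2_pos | apply le_INR, H].
Qed.

Lemma dyadic_le_1 n i : (i <= 2 ^ n)%nat -> dyadic n i <= 1.
Proof.
  intros H. apply le_INR in H. rewrite INR_pow2 in H. unfold dyadic.
  pose proof (pow_lt 2 n ltac:(lra)). apply (Rmult_le_reg_r (2 ^ n)); [lra|].
  unfold Rdiv. rewrite Rmult_assoc, Rinv_l by lra. lra.
Qed.

Lemma dyadic_inj n i j : dyadic n i = dyadic n j -> i = j.
Proof.
  unfold dyadic. intros H. pose proof (pow_lt 2 n ltac:(lra)). apply INR_eq.
  apply Rmult_eq_reg_r with (/ 2 ^ n); [exact H | apply Rinv_neq_0_compat; lra].
Qed.

Lemma dyadic_0 n : dyadic n 0 = 0.
Proof. unfold dyadic. simpl. lra. Qed.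

Lemma dyadic_0_1 : dyadic 0 1 = 1.
Proof. unfold dyadic. simpl. lra. Qed.

Lemma dyadic_refine m k i : dyadic m i = dyadic (m + k) (i * 2 ^ k).
Proof.
  unfold dyadic. rewrite mult_INR, INR_pow2, pow_add.
  pose proof (pow_lt 2 m ltac:(lra)). pose proof (pow_lt 2 k ltac:(lra)). field. lra.
Qed.

Definition dyadic_floor (m : nat) (t : R) : nat := Z.to_nat (Int_part (t * 2 ^ m)).

Lemma dyadic_floor_spec m t : 0 <= t <= 1 ->
  (dyadic_floor m t <= 2 ^ m)%nat /\ dyadic m (dyadic_floor m t) <= t /\
  t - dyadic m (dyadic_floor m t) < / 2 ^ m.
Proof.
  intros Ht. pose proof (pow_lt 2 m ltac:(lra)) as Hp.
  set (r := t * 2 ^ m).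
  assert (Hr : 0 <= r <= 2 ^ m).
  { unfold r. split; [apply Rmult_le_pos; lra|].
    pose proof (Rmult_le_compat_r (2 ^ m) t 1 ltac:(lra) ltac:(lra)). lra. }
  destruct (base_Int_part r) as [H1 H2].
  assert (Hz : (0 <= Int_part r)%Z).
  { assert (Hgt : (-1 < Int_part r)%Z) by (apply lt_IZR; lra). lia. }
  assert (HI : INR (dyadic_floor m t) = IZR (Int_part r)).
  { unfold dyadic_floor. fold r. rewrite INR_IZR_INZ, Z2Nat.id by exact Hz. reflexivity. }
  assert (Hdy : dyadic m (dyadic_floor m t) = IZR (Int_part r) / 2 ^ m)
    by (unfold dyadic; rewrite HI; reflexivity).
  rewrite Hdy. split; [|split].
  - apply INR_le. rewrite INR_pow2, HI. lra.
  - apply Rmult_le_reg_r with (2 ^ m); [lra|].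
    unfold Rdiv. rewrite Rmult_assoc, Rinv_l by lra. unfold r in *. lra.
  - apply Rmult_lt_reg_r with (2 ^ m); [lra|].
    unfold Rdiv. rewrite Rmult_minus_distr_r, Rmult_assoc, !Rinv_l by lra. unfold r in *. lra.
Qed.

Lemma dyadic_floor_converges (f : R -> R) t : continuous_on_unit f -> 0 <= t <= 1 ->
  forall e, 0 < e -> exists M, forall m, (M <= m)%nat ->
    Rabs (f (dyadic m (dyadic_floor m t)) - f t) < e.
Proof.
  intros Hf Ht e He. destruct (Hf t Ht e He) as [del [Hdel Hd]].
  destruct (eventually_inv_pow2_lt del Hdel) as [M HM]. exists M. intros m Hm.
  destruct (dyadic_floor_spec m t Ht) as [_ [Ha1 Ha2]]. specialize (HM m Hm).
  apply Hd; [split; [apply dyadic_nonneg | lra] | rewrite Rabs_left1; lra].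
Qed.

(** * Metric spaces, compactness and the Hausdorff distance *)

Section Metric.
Context {X : Type} (d : X -> X -> R) (Hm : is_metric d).

Lemma dist_refl x : d x x = 0.
Proof. apply (proj1 Hm). reflexivity. Qed.

Lemma dist_sym x y : d x y = d y x.
Proof. apply (proj1 (proj2 Hm)). Qed.

Lemma dist_triangle x y z : d x z <= d x y + d y z.
Proof. apply (proj2 (proj2 Hm)). Qed.

Lemma dist_nonneg x y : 0 <= d x y.
Proof. pose proof (dist_triangle x y x). rewrite dist_refl, (dist_sym y x) in H. lra. Qed.

Lemma dist_le0 x y : d x y <= 0 -> x = y.
Proof. intros H. apply (proj1 Hm). pose proof (dist_nonneg x y). lra. Qed.

Lemma dist_telescope (g : nat -> X) (mu : nat -> R) N :
  (forall i, (i < N)%nat -> d (g i) (g (S i)) <= mu (S i) - mu i) ->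
  forall i j, (i <= j)%nat -> (j <= N)%nat -> d (g i) (g j) <= mu j - mu i.
Proof.
  intros Hstep i j Hij Hj. induction Hij as [|j Hij IH].
  - rewrite dist_refl. lra.
  - specialize (IH ltac:(lia)). specialize (Hstep j ltac:(lia)).
    pose proof (dist_triangle (g i) (g j) (g (S j))). lra.
Qed.

Lemma limit_unique u a b : converges_to d u a -> converges_to d u b -> a = b.
Proof.
  intros Ha Hb. apply dist_le0, le_epsilon. intros e He.
  destruct (Ha (e / 2)) as [N1 H1]; [lra|].
  destruct (Hb (e / 2)) as [N2 H2]; [lra|].
  specialize (H1 (max N1 N2) ltac:(lia)). specialize (H2 (max N1 N2) ltac:(lia)).
  pose proof (dist_triangle a (u (max N1 N2)) b). rewrite dist_sym in H1. lra.
Qed.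

Lemma limit_dist_le u v a b c :
  converges_to d u a -> converges_to d v b ->
  (forall e, 0 < e -> exists N, forall n, (N <= n)%nat -> d (u n) (v n) <= c + e) ->
  d a b <= c.
Proof.
  intros Ha Hb Hc. apply le_epsilon. intros e He.
  destruct (Ha (e / 3)) as [N1 H1]; [lra|].
  destruct (Hb (e / 3)) as [N2 H2]; [lra|].
  destruct (Hc (e / 3)) as [N3 H3]; [lra|].
  set (n := max N1 (max N2 N3)).
  specialize (H1 n ltac:(lia)). specialize (H2 n ltac:(lia)). specialize (H3 n ltac:(lia)).
  pose proof (dist_triangle a (u n) b). pose proof (dist_triangle (u n) (v n) b).
  rewrite dist_sym in H1. lra.
Qed.

Lemma geometric_cauchy (x : nat -> X) (C beta : R) : 0 <= beta < 1 ->
  (forall n, d (x n) (x (S n)) <= C * beta ^ n) -> cauchy_seq d x.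
Proof.
  intros Hb Hstep.
  assert (HC : 0 <= C).
  { pose proof (Hstep 0%nat). pose proof (dist_nonneg (x 0%nat) (x 1%nat)). simpl in *. lra. }
  (* telescoping against the geometric series: C beta^k = mu (k+1) - mu k *)
  assert (Htail : forall n m, (n <= m)%nat -> d (x n) (x m) <= C * beta ^ n / (1 - beta)).
  { intros n m Hnm.
    eapply Rle_trans;
      [apply (dist_telescope x (fun k => - (C * beta ^ k / (1 - beta))) m); [|exact Hnm|lia]|].
    - intros i _. eapply Rle_trans; [apply Hstep|]. right. simpl. field. lra.
    - pose proof (pow_le beta m (proj1 Hb)).
      assert (0 <= C * beta ^ m / (1 - beta)) by (apply Rdiv_le_0_compat; [nra | lra]). lra. }
  intros e He.
  destruct (pow_lt_1_zero beta ltac:(rewrite Rabs_right; lra) (e * (1 - beta) / (C + 1))) as [N HN].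
  { apply Rdiv_lt_0_compat; [apply Rmult_lt_0_compat|]; lra. }
  assert (Hfar : forall a b, (N <= a)%nat -> (a <= b)%nat -> d (x a) (x b) < e).
  { intros a b Ha Hab. eapply Rle_lt_trans; [apply Htail, Hab|].
    specialize (HN a Ha). rewrite Rabs_right in HN by (apply Rle_ge, pow_le; lra).
    assert (Hpow : beta ^ a * (C + 1) < e * (1 - beta)).
    { replace (e * (1 - beta)) with (e * (1 - beta) / (C + 1) * (C + 1)) by (field; lra).
      apply Rmult_lt_compat_r; lra. }
    apply (Rmult_lt_reg_r (1 - beta)); [lra|]. unfold Rdiv.
    rewrite Rmult_assoc, Rinv_l, Rmult_1_r by lra.
    pose proof (pow_le beta a (proj1 Hb)). nra. }
  exists N. intros m n Hm' Hn'. destruct (Nat.le_ge_cases m n).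
  - apply Hfar; lia.
  - rewrite dist_sym. apply Hfar; lia.
Qed.

Lemma compact_cluster_point (K : X -> Prop) (u : nat -> X) :
  compact_set d K -> (forall n, K (u n)) ->
  exists l, K l /\ forall e, 0 < e -> forall N, exists n, (N <= n)%nat /\ d (u n) l < e.
Proof.
  intros HK Hu. apply NNPP. intros Hno.
  (* Cover K by balls around points that u eventually avoids; a finite subcover is avoided
     by u from some index on, which is absurd. *)
  set (I := {l : X & {e : R & {N : nat | 0 < e /\ forall n, (N <= n)%nat -> e <= d (u n) l}}}).
  set (U := fun (i : I) (y : X) => d (projT1 i) y < projT1 (projT2 i)).
  destruct (HK I U) as [cover Hcover].
  - intros i y Hy. exists (projT1 (projT2 i) - d (projT1 i) y). split; [unfold U in Hy; lra|].
    intros z Hz. unfold U in *. pose proof (dist_triangle (projT1 i) y z). lra.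
  - intros x Kx.
    assert (exists e N, 0 < e /\ forall n, (N <= n)%nat -> e <= d (u n) x) as [e [N [He HN]]].
    { apply NNPP. intros H. apply Hno. exists x. split; [exact Kx|].
      intros e He N. apply NNPP. intros H2. apply H. exists e, N. split; [exact He|].
      intros n Hn. apply Rnot_lt_le. intros H3. apply H2. exists n. split; assumption. }
    exists (existT _ x (existT _ e (exist _ N (conj He HN)))).
    unfold U. simpl. rewrite dist_refl. exact He.
  - set (M := fold_right (fun (i : I) acc => max (proj1_sig (projT2 (projT2 i))) acc) 0%nat cover).
    assert (HM : forall i, In i cover -> (proj1_sig (projT2 (projT2 i)) <= M)%nat).
    { unfold M. clear. induction cover as [|j r IH]; simpl; [tauto|].
      intros i [<-|Hi]; [lia|]. specialize (IH i Hi). lia. }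
    destruct (Hcover (u M) (Hu M)) as [i [Hi HU]].
    specialize (HM i Hi). unfold U in HU. clear Hi Hcover.
    destruct i as [l [e [N [He HN]]]]. simpl in *.
    specialize (HN M HM). rewrite dist_sym in HU. lra.
Qed.

Lemma compact_convergent_subseq (K : X -> Prop) (u : nat -> X) :
  compact_set d K -> (forall n, K (u n)) ->
  exists phi : nat -> nat, (forall n, (phi n < phi (S n))%nat) /\
    exists l, K l /\ converges_to d (fun n => u (phi n)) l.
Proof.
  intros HK Hu. destruct (compact_cluster_point K u HK Hu) as [l [Kl Hl]].
  assert (Hnext : forall N k : nat, exists n, (N <= n)%nat /\ d (u n) l < / 2 ^ k)
    by (intros N k; apply Hl, inv_pow2_pos).
  destruct (functional_choice
    (fun (Nk : nat * nat) n => (fst Nk <= n)%nat /\ d (u n) l < / 2 ^ snd Nk)) as [pick Hpick];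
    [intros [N k]; apply Hnext|].
  set (phi := fix phi k :=
    match k with 0%nat => pick (0, 0)%nat | S k' => pick (S (phi k'), S k') end).
  exists phi. split.
  - intros n. simpl. destruct (Hpick (S (phi n), S n)). simpl in *. lia.
  - exists l. split; [exact Kl|]. intros e He.
    destruct (eventually_inv_pow2_lt e He) as [N HN]. exists N. intros n Hn.
    assert (d (u (phi n)) l < / 2 ^ n) by (destruct n; apply (Hpick (_, _))).
    specialize (HN n Hn). lra.
Qed.

Lemma compact_closest (K : X -> Prop) z c :
  compact_set d K -> (forall e, 0 < e -> exists w, K w /\ d z w <= c + e) ->
  exists w, K w /\ d z w <= c.
Proof.
  intros HK Hnear.
  destruct (functional_choice (fun k w => K w /\ d z w <= c + / 2 ^ k)) as [w Hw];
    [intros k; apply Hnear, inv_pow2_pos|].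
  destruct (compact_convergent_subseq K w HK (fun k => proj1 (Hw k)))
    as [phi [Hphi [l [Kl Hl]]]].
  exists l. split; [exact Kl|].
  apply le_epsilon. intros e He.
  destruct (Hl (e / 2)) as [N1 H1]; [lra|].
  destruct (eventually_inv_pow2_lt (e / 2)) as [N2 H2]; [lra|].
  set (n := max N1 N2).
  specialize (H1 n ltac:(lia)).
  specialize (H2 (phi n) ltac:(pose proof (increasing_ge_id phi Hphi n); lia)).
  pose proof (proj2 (Hw (phi n))). pose proof (dist_triangle z (w (phi n)) l). lra.
Qed.

Lemma diagonal_subseq (s : nat -> nat -> X) (K : nat -> X -> Prop) :
  (forall k, compact_set d (K k)) -> (forall k n, K k (s k n)) ->
  exists phi : nat -> nat, (forall n, (n <= phi n)%nat) /\
    forall k, exists l, K k l /\ converges_to d (fun n => s k (phi n)) l.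
Proof.
  intros HK Hs.
  destruct (functional_choice (fun (kf : nat * (nat -> nat)) (sg : nat -> nat) =>
     (forall n, (sg n < sg (S n))%nat) /\
     exists l, K (fst kf) l /\ converges_to d (fun n => s (fst kf) (snd kf (sg n))) l))
    as [sub Hsub].
  { intros [k f]. apply (compact_convergent_subseq (K k) (fun n => s k (f n))); auto. }
  (* Psi k is the k-fold nested subsequence; row k converges along Psi (S k). *)
  set (Psi := fix Psi k :=
    match k with 0%nat => fun n : nat => n | S k' => fun n => Psi k' (sub (k', Psi k') n) end).
  assert (PsiS : forall k n, Psi (S k) n = Psi k (sub (k, Psi k) n)) by reflexivity.
  assert (Psi_incr : forall k n, (Psi k n < Psi k (S n))%nat).
  { induction k; intros n; [simpl; lia|]. rewrite !PsiS.
    apply increasing_lt; [exact IHk | apply (Hsub (k, Psi k))]. }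
  assert (Psi_tail : forall k j, exists rho : nat -> nat, (forall n, (n <= rho n)%nat) /\
                       forall n, Psi (S k + j)%nat n = Psi (S k) (rho n)).
  { intros k j. induction j as [|j [rho [Hrho1 Hrho2]]].
    - exists (fun n => n). split; [lia|]. intros n. rewrite Nat.add_0_r. reflexivity.
    - set (sg := sub ((S k + j)%nat, Psi (S k + j)%nat)).
      exists (fun n => rho (sg n)). split.
      + intros n. pose proof (increasing_ge_id sg (proj1 (Hsub (_, _))) n).
        specialize (Hrho1 (sg n)). lia.
      + intros n. rewrite Nat.add_succ_r, PsiS. apply Hrho2. }
  exists (fun n => Psi (S n) n). split.
  - intros n. apply increasing_ge_id, Psi_incr.
  - intros k. destruct (Hsub (k, Psi k)) as [_ [l [Kl Hl]]]. exists l. split; [exact Kl|].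
    intros e He. destruct (Hl e He) as [N HN]. exists (max N k). intros n Hn.
    destruct (Psi_tail k (n - k)%nat) as [rho [Hrho1 Hrho2]].
    replace (S n) with (S k + (n - k))%nat by lia. rewrite Hrho2, PsiS.
    apply HN. specialize (Hrho1 n). lia.
Qed.

Lemma hausdorff_sym (A B : X -> Prop) : hausdorff d A B = hausdorff d B A.
Proof. unfold hausdorff. apply Lub_Rbar_eqset. intros r. tauto. Qed.

Lemma pt_set_dist_le_hausdorff (A B : X -> Prop) a :
  A a -> Rbar_le (pt_set_dist d a B) (hausdorff d A B).
Proof. intros Ha. apply (proj1 (Lub_Rbar_correct _)). left. exists a. auto. Qed.

Lemma pt_set_dist_approx (a : X) (B : X -> Prop) c e :
  (exists b, B b) -> pt_set_dist d a B <= c -> 0 < e -> exists b, B b /\ d a b < c + e.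
Proof.
  intros [b0 Hb0] Hc He. unfold pt_set_dist in Hc.
  set (S := fun r => exists b, B b /\ r = d a b) in *.
  destruct (Glb_Rbar_correct S) as [Hlb Hglb].
  assert (H1 : Rbar_le (Glb_Rbar S) (d a b0)) by (apply Hlb; exists b0; auto).
  assert (H0 : Rbar_le 0 (Glb_Rbar S)) by (apply Hglb; intros x [b [_ ->]]; apply dist_nonneg).
  destruct (Glb_Rbar S) as [g| |]; simpl in H1, H0, Hc; try contradiction.
  apply NNPP. intros Hno.
  assert (Hg : Rbar_le (c + e) g).
  { apply Hglb. intros x [b [Hb ->]]. simpl. apply Rnot_lt_le.
    intros Hlt. apply Hno. exists b. auto. }
  simpl in Hg. lra.
Qed.

Lemma hausdorff_closest (A B : X -> Prop) a c :
  nonempty_compact d B -> Rbar_le (hausdorff d A B) (Finite c) -> A a ->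
  exists b, B b /\ d a b <= c.
Proof.
  intros [HBne HB] HH Ha. apply (compact_closest B a c HB). intros e He.
  destruct (pt_set_dist_approx a B c e HBne) as [b [Hb Hab]];
    [exact (Rbar_le_trans _ _ _ (pt_set_dist_le_hausdorff A B a Ha) HH) | exact He |].
  exists b. split; [exact Hb | lra].
Qed.

Lemma dyadic_dist_le_abs (z : R -> X) (mu : R -> R) :
  (forall M i j, (i <= j)%nat -> (j <= 2 ^ M)%nat ->
     d (z (dyadic M i)) (z (dyadic M j)) <= mu (dyadic M j) - mu (dyadic M i)) ->
  forall m i m' j, (i <= 2 ^ m)%nat -> (j <= 2 ^ m')%nat ->
    d (z (dyadic m i)) (z (dyadic m' j)) <= Rabs (mu (dyadic m' j) - mu (dyadic m i)).
Proof.
  intros Hz.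
  assert (Hlevel : forall M i j, (i <= 2 ^ M)%nat -> (j <= 2 ^ M)%nat ->
     d (z (dyadic M i)) (z (dyadic M j)) <= Rabs (mu (dyadic M j) - mu (dyadic M i))).
  { intros M i j Hi Hj. destruct (Nat.le_ge_cases i j) as [Hij|Hji].
    - pose proof (Hz M i j Hij Hj). pose proof (RRle_abs (mu (dyadic M j) - mu (dyadic M i))).
      lra.
    - pose proof (Hz M j i Hji Hi). rewrite dist_sym, Rabs_minus_sym.
      pose proof (RRle_abs (mu (dyadic M i) - mu (dyadic M j))). lra. }
  (* compare on the common grid of level m + m' *)
  intros m i m' j Hi Hj.
  rewrite (dyadic_refine m m' i), (dyadic_refine m' m j), (Nat.add_comm m' m).
  apply Hlevel; rewrite Nat.pow_add_r; nia.
Qed.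

Lemma dyadic_extension (z : R -> X) (mu : R -> R) :
  complete_metric d -> continuous_on_unit mu ->
  (forall M i j, (i <= j)%nat -> (j <= 2 ^ M)%nat ->
     d (z (dyadic M i)) (z (dyadic M j)) <= mu (dyadic M j) - mu (dyadic M i)) ->
  exists q : R -> X,
    (forall u v, 0 <= u <= 1 -> 0 <= v <= 1 -> d (q u) (q v) <= Rabs (mu v - mu u)) /\
    (forall M i, (i <= 2 ^ M)%nat -> q (dyadic M i) = z (dyadic M i)).
Proof.
  intros CX Hmu Hz.
  pose proof (dyadic_dist_le_abs z mu Hz) as Hdy.
  set (a := fun m t => dyadic m (dyadic_floor m t)).
  assert (Ha : forall m t, 0 <= t <= 1 -> (dyadic_floor m t <= 2 ^ m)%nat)
    by (intros m t Ht; apply dyadic_floor_spec, Ht).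
  assert (Hcauchy : forall t, 0 <= t <= 1 -> cauchy_seq d (fun m => z (a m t))).
  { intros t Ht e He.
    destruct (dyadic_floor_converges mu t Hmu Ht (e / 2 / 2)) as [N HN]; [lra|].
    exists N. intros m m' Hm1 Hm2. eapply Rle_lt_trans; [apply Hdy; apply Ha, Ht|].
    eapply Rle_lt_trans; [apply (Rabs_diff_perturb (mu t) _ (mu t) _ (e / 2)); apply HN; eauto|].
    rewrite Rminus_diag, Rabs_R0. lra. }
  destruct (functional_choice (fun t x => 0 <= t <= 1 -> converges_to d (fun m => z (a m t)) x))
    as [q Hq].
  { intros t. destruct (classic (0 <= t <= 1)) as [Ht|Ht].
    - destruct (CX _ (Hcauchy t Ht)) as [x Hx]. exists x. auto.
    - exists (z t). tauto. }
  exists q. split.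
  - intros u v Hu Hv. apply (limit_dist_le _ _ _ _ _ (Hq u Hu) (Hq v Hv)). intros e He.
    destruct (dyadic_floor_converges mu u Hmu Hu (e / 2)) as [N1 H1]; [lra|].
    destruct (dyadic_floor_converges mu v Hmu Hv (e / 2)) as [N2 H2]; [lra|].
    exists (max N1 N2). intros m HmN. eapply Rle_trans; [apply Hdy; apply Ha; assumption|].
    unfold a. apply Rabs_diff_perturb; [apply H1 | apply H2]; lia.
  - intros M i Hi.
    assert (Ht : 0 <= dyadic M i <= 1) by (split; [apply dyadic_nonneg | apply dyadic_le_1, Hi]).
    apply (limit_unique (fun m => z (a m (dyadic M i)))); [exact (Hq _ Ht)|].
    intros e He. destruct (dyadic_floor_converges mu _ Hmu Ht e He) as [N HN].
    exists N. intros m HmN. eapply Rle_lt_trans; [apply Hdy; [apply Ha, Ht | exact Hi]|].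
    rewrite Rabs_minus_sym. apply HN, HmN.
Qed.

End Metric.

(** * Arc length *)

Fixpoint chain_le (a : R) (l : list R) (b : R) : Prop :=
  match l with nil => a <= b | x :: r => a <= x /\ chain_le x r b end.

Fixpoint chain_lt (a : R) (l : list R) (b : R) : Prop :=
  match l with nil => a < b | x :: r => a < x /\ chain_lt x r b end.

Lemma chain_le_bounds a l b : chain_le a l b -> a <= b.
Proof.
  revert a; induction l as [|x r IH]; simpl; intros a H; [exact H|].
  destruct H as [H1 H2]. specialize (IH x H2). lra.
Qed.

Lemma chain_le_app a l1 c l2 b : chain_le a l1 c -> chain_le c l2 b -> chain_le a (l1 ++ c :: l2) b.
Proof.
  revert a; induction l1 as [|x r IH]; simpl; intros a H1 H2; [tauto|].
  split; [tauto|]. apply IH; tauto.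
Qed.

Lemma chain_lt_nth a l b i : chain_lt a l b -> (i < S (length l))%nat ->
  nth i (a :: l ++ b :: nil) 0 < nth (S i) (a :: l ++ b :: nil) 0.
Proof.
  revert a i; induction l as [|x r IH]; simpl; intros a i H Hi.
  - destruct i; [exact H | lia].
  - destruct H as [H1 H2]. destruct i; [exact H1|]. apply (IH x); [exact H2 | lia].
Qed.

Definition controlled {X : Type} (d : X -> X -> R) (p : R -> X) (lam : R -> R) : Prop :=
  (forall u v, 0 <= u -> u <= v -> v <= 1 -> d (p u) (p v) <= lam v - lam u) /\
  continuous_on_unit lam.

Section ArcLength.
Context {X : Type} (d : X -> X -> R) (Hm : is_metric d) (p : R -> X).

Fixpoint chain_sum (a : R) (l : list R) (b : R) : R :=
  match l with nil => d (p a) (p b) | x :: r => d (p a) (p x) + chain_sum x r b end.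

Lemma chain_sum_app a l1 c l2 b :
  chain_sum a (l1 ++ c :: l2) b = chain_sum a l1 c + chain_sum c l2 b.
Proof. revert a; induction l1 as [|x r IH]; simpl; intros a; [reflexivity|]. rewrite IH. ring. Qed.

Lemma chain_sum_degenerate b l : chain_le b l b -> chain_sum b l b = 0.
Proof.
  assert (G : forall a, chain_le a l b -> b <= a -> chain_sum a l b = 0 /\ a = b).
  { induction l as [|x r IH]; simpl; intros a H Hba.
    - replace a with b by lra. split; [apply (dist_refl d Hm) | reflexivity].
    - destruct H as [H1 H2]. pose proof (chain_le_bounds _ _ _ H2).
      destruct (IH x H2 ltac:(lra)) as [IH1 IH2]. subst x. replace a with b by lra.
      rewrite IH1, (dist_refl d Hm). split; [ring | reflexivity]. }
  intros H. apply (G b H). lra.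
Qed.

Lemma chain_split a l b c : chain_le a l b -> a <= c <= b ->
  exists l1 l2, chain_le a l1 c /\ chain_le c l2 b /\
    chain_sum a l b <= chain_sum a l1 c + chain_sum c l2 b.
Proof.
  revert a; induction l as [|x r IH]; simpl; intros a H Hc.
  - exists nil, nil. simpl. split; [lra | split; [lra|]]. apply (dist_triangle d Hm).
  - destruct H as [H1 H2]. destruct (Rle_dec c x).
    + exists nil, (x :: r). simpl. split; [lra | split; [tauto|]].
      pose proof (dist_triangle d Hm (p a) (p c) (p x)). lra.
    + destruct (IH x H2 ltac:(lra)) as [l1 [l2 [A1 [A2 A3]]]].
      exists (x :: l1), l2. simpl. split; [tauto | split; [tauto|]]. lra.
Qed.

Lemma chain_advance_start t l b : chain_le t l b -> t < b ->
  exists f l', t < f /\ forall s, t < s <= f ->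
    chain_le s l' b /\ chain_sum t l b <= d (p t) (p s) + chain_sum s l' b.
Proof.
  induction l as [|x r IH]; simpl; intros H Ht.
  - exists b, nil. split; [exact Ht|].
    intros s Hs. simpl. split; [lra|]. apply (dist_triangle d Hm).
  - destruct H as [H1 H2]. destruct (Rle_lt_or_eq_dec t x H1) as [Hlt|Heq].
    + exists x, (x :: r). split; [exact Hlt|]. intros s Hs. simpl.
      split; [split; [lra | exact H2]|].
      pose proof (dist_triangle d Hm (p t) (p s) (p x)). lra.
    + subst x. destruct (IH H2 Ht) as [f [l' [Hf Hl']]]. exists f, l'. split; [exact Hf|].
      intros s Hs. destruct (Hl' s Hs) as [A B]. split; [exact A|]. rewrite (dist_refl d Hm). lra.
Qed.

Lemma chain_retreat_end a l t : chain_le a l t -> a < t ->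
  exists m, a <= m < t /\ forall s, m <= s <= t ->
    exists l', chain_le a l' s /\ chain_sum a l t <= chain_sum a l' s + d (p s) (p t).
Proof.
  revert a; induction l as [|x r IH]; simpl; intros a H Ha.
  - exists a. split; [lra|].
    intros s Hs. exists nil. simpl. split; [lra|]. apply (dist_triangle d Hm).
  - destruct H as [H1 H2]. pose proof (chain_le_bounds _ _ _ H2).
    destruct (Rle_lt_or_eq_dec x t H) as [Hlt|Heq].
    + destruct (IH x H2 Hlt) as [m [Hm1 Hm2]]. exists m. split; [lra|].
      intros s Hs. destruct (Hm2 s Hs) as [l' [A B]]. exists (x :: l'). simpl.
      split; [split; [lra | exact A]|]. lra.
    + subst x. exists a. split; [lra|]. intros s Hs. exists nil. simpl. split; [lra|].
      rewrite (chain_sum_degenerate t r H2). pose proof (dist_triangle d Hm (p a) (p s) (p t)). lra.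
Qed.

Lemma chain_strict a l b : chain_le a l b -> a < b ->
  exists l', chain_lt a l' b /\ chain_sum a l b <= chain_sum a l' b.
Proof.
  revert a; induction l as [|x r IH]; simpl; intros a H Hab.
  - exists nil. simpl. split; [exact Hab | lra].
  - destruct H as [H1 H2]. pose proof (chain_le_bounds _ _ _ H2).
    destruct (Rle_lt_or_eq_dec x b H) as [Hlt|Heq].
    + destruct (IH x H2 Hlt) as [r' [A B]]. destruct (Rle_lt_or_eq_dec a x H1) as [Hax|Hax].
      * exists (x :: r'). simpl. split; [tauto | lra].
      * subst x. exists r'. split; [exact A|]. rewrite (dist_refl d Hm). lra.
    + subst x. exists nil. simpl. split; [exact Hab|]. rewrite (chain_sum_degenerate b r H2). lra.
Qed.

Lemma chain_lt_partition_sum a l b : chain_lt a l b ->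
  sum_f_R0 (fun i => d (p (nth i (a :: l ++ b :: nil) 0)) (p (nth (S i) (a :: l ++ b :: nil) 0)))
    (length l) = chain_sum a l b.
Proof.
  revert a; induction l as [|x r IH]; intros a H; [reflexivity|].
  destruct H as [_ H]. change (length (x :: r)) with (S (length r)). rewrite decomp_sum by lia.
  cbn [pred chain_sum]. rewrite <- (IH x H). reflexivity.
Qed.

Lemma chain_sum_le_path_length L l :
  path_length d p = Finite L -> chain_le 0 l 1 -> chain_sum 0 l 1 <= L.
Proof.
  intros HL Hl. destruct (chain_strict 0 l 1 Hl ltac:(lra)) as [l' [Hl' Hsum]].
  eapply Rle_trans; [exact Hsum|].
  set (t := fun i => nth i (0 :: l' ++ 1 :: nil) 0).
  assert (Hpart : is_partition (S (length l')) t).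
  { split; [lia | split; [reflexivity | split]].
    - unfold t. simpl. apply nth_middle.
    - intros i Hi. apply (chain_lt_nth 0 l' 1 i Hl' Hi). }
  assert (Hval : partition_sum d p (S (length l')) t = chain_sum 0 l' 1).
  { unfold partition_sum. replace (S (length l') - 1)%nat with (length l') by lia.
    apply chain_lt_partition_sum, Hl'. }
  assert (Hle : Rbar_le (chain_sum 0 l' 1) (path_length d p)).
  { apply (proj1 (Lub_Rbar_correct _)). exists (S (length l')), t.
    split; [exact Hpart | symmetry; exact Hval]. }
  rewrite HL in Hle. exact Hle.
Qed.

Lemma path_length_finite :
  Rbar_lt (path_length d p) p_infty -> exists L, path_length d p = Finite L.
Proof.
  intros H.
  assert (Hle : Rbar_le (partition_sum d p 1 INR) (path_length d p)).
  { apply (proj1 (Lub_Rbar_correct _)). exists 1%nat, INR. split; [|reflexivity].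
    split; [lia | split; [reflexivity | split; [reflexivity|]]]. intros i Hi. apply lt_INR. lia. }
  destruct (path_length d p) as [L| |]; simpl in *; try contradiction. exists L. reflexivity.
Qed.

Variable L : R.
Hypothesis HL : forall l, chain_le 0 l 1 -> chain_sum 0 l 1 <= L.

Definition arc (t : R) : R :=
  real (Lub_Rbar (fun r => exists l, chain_le 0 l t /\ r = chain_sum 0 l t)).

Lemma arc_spec t : 0 <= t <= 1 ->
  (forall l, chain_le 0 l t -> chain_sum 0 l t <= arc t) /\
  (forall B, (forall l, chain_le 0 l t -> chain_sum 0 l t <= B) -> arc t <= B).
Proof.
  intros Ht. destruct (Lub_Rbar_finite (fun r => exists l, chain_le 0 l t /\ r = chain_sum 0 l t) L)
    as [H1 H2].
  - exists (chain_sum 0 nil t), nil. simpl. split; [lra | reflexivity].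
  - intros x [l [Hl ->]].
    assert (Hl1 : chain_le 0 (l ++ t :: nil) 1) by (apply chain_le_app; simpl; auto; lra).
    pose proof (HL _ Hl1). rewrite chain_sum_app in H. simpl in H.
    pose proof (dist_nonneg d Hm (p t) (p 1)). lra.
  - split.
    + intros l Hl. apply H1. exists l. auto.
    + intros B HB. apply H2. intros x [l [Hl ->]]. apply HB, Hl.
Qed.

Lemma arc_approx t e : 0 <= t <= 1 -> 0 < e ->
  exists l, chain_le 0 l t /\ arc t - e < chain_sum 0 l t.
Proof.
  intros Ht He. apply NNPP. intros Hno.
  assert (arc t <= arc t - e); [|lra].
  apply (proj2 (arc_spec t Ht)). intros l Hl.
  apply Rnot_lt_le. intros Hlt. apply Hno. exists l. auto.
Qed.

Lemma arc_add_chain u l v : 0 <= u -> v <= 1 -> chain_le u l v -> arc u + chain_sum u l v <= arc v.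
Proof.
  intros Hu Hv Hl. pose proof (chain_le_bounds _ _ _ Hl).
  assert (arc u <= arc v - chain_sum u l v); [|lra].
  apply (proj2 (arc_spec u ltac:(lra))). intros k Hk.
  pose proof (proj1 (arc_spec v ltac:(lra)) _ (chain_le_app _ _ _ _ _ Hk Hl)).
  rewrite chain_sum_app in H0. lra.
Qed.

Hypothesis Hcont : continuous_path d p.

Lemma arc_left_continuous t e : 0 < t <= 1 -> 0 < e ->
  exists del, 0 < del /\ forall s, 0 <= s -> t - del < s <= t -> arc t - arc s < e.
Proof.
  intros Ht He.
  destruct (Hcont t ltac:(lra) (e / 2) ltac:(lra)) as [del1 [Hdel1 Hnear]].
  destruct (arc_approx t (e / 2) ltac:(lra) ltac:(lra)) as [l [Hl Hlsum]].
  destruct (chain_retreat_end 0 l t Hl ltac:(lra)) as [m [Hm1 Hm2]].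
  exists (Rmin del1 (t - m)). split; [apply Rmin_glb_lt; lra|].
  intros s Hs Hst. pose proof (Rmin_l del1 (t - m)). pose proof (Rmin_r del1 (t - m)).
  destruct (Hm2 s ltac:(lra)) as [l' [Hl' Hsum']].
  pose proof (proj1 (arc_spec s ltac:(lra)) l' Hl').
  assert (d (p s) (p t) < e / 2) by (apply Hnear; [lra | rewrite Rabs_left1; lra]).
  lra.
Qed.

Lemma arc_right_continuous t e : 0 <= t < 1 -> 0 < e ->
  exists del, 0 < del /\ forall s, s <= 1 -> t <= s < t + del -> arc s - arc t < e.
Proof.
  intros Ht He.
  destruct (Hcont t ltac:(lra) (e / 2) ltac:(lra)) as [del1 [Hdel1 Hnear]].
  destruct (arc_approx 1 (e / 2) ltac:(lra) ltac:(lra)) as [l [Hl Hlsum]].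
  destruct (chain_split 0 l 1 t Hl ltac:(lra)) as [l1 [l2 [Hl1 [Hl2 Hsplit]]]].
  destruct (chain_advance_start t l2 1 Hl2 ltac:(lra)) as [f [l3 [Hf Hl3]]].
  exists (Rmin del1 (f - t)). split; [apply Rmin_glb_lt; lra|].
  intros s Hs Hst. pose proof (Rmin_l del1 (f - t)). pose proof (Rmin_r del1 (f - t)).
  destruct (Rle_lt_or_eq_dec t s (proj1 Hst)) as [Hts|<-]; [|lra].
  destruct (Hl3 s ltac:(lra)) as [Hl3s Hsum3].
  pose proof (arc_add_chain s l3 1 ltac:(lra) ltac:(lra) Hl3s).
  pose proof (proj1 (arc_spec t ltac:(lra)) l1 Hl1).
  assert (d (p s) (p t) < e / 2) by (apply Hnear; [lra | rewrite Rabs_right; lra]).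
  rewrite (dist_sym d Hm) in H3. lra.
Qed.

Lemma arc_controls : controlled d p arc.
Proof.
  assert (Hdom : forall u v, 0 <= u -> u <= v -> v <= 1 -> d (p u) (p v) <= arc v - arc u).
  { intros u v Hu Huv Hv. pose proof (arc_add_chain u nil v Hu Hv Huv). simpl in H. lra. }
  split; [exact Hdom|]. intros t Ht e He.
  assert (Hleft : exists del, 0 < del /\ forall s, 0 <= s -> t - del < s <= t -> arc t - arc s < e).
  { destruct (Rle_lt_or_eq_dec 0 t (proj1 Ht)) as [Ht0 | <-]; [apply arc_left_continuous; lra|].
    exists 1. split; [lra|]. intros s Hs Hst. replace s with 0 by lra. lra. }
  assert (Hright :
    exists del, 0 < del /\ forall s, s <= 1 -> t <= s < t + del -> arc s - arc t < e).
  { destruct (Rle_lt_or_eq_dec t 1 (proj2 Ht)) as [Ht1 | ->]; [apply arc_right_continuous; lra|].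
    exists 1. split; [lra|]. intros s Hs Hst. replace s with 1 by lra. lra. }
  destruct Hleft as [delL [HdelL HL']]. destruct Hright as [delR [HdelR HR']].
  exists (Rmin delL delR). split; [apply Rmin_glb_lt; lra|].
  intros s Hs Hst. pose proof (Rmin_l delL delR). pose proof (Rmin_r delL delR).
  destruct (Rle_dec s t) as [Hst'|Hst'].
  - pose proof (Hdom s t ltac:(lra) Hst' ltac:(lra)). pose proof (dist_nonneg d Hm (p s) (p t)).
    rewrite Rabs_left1 in Hst by lra. rewrite Rabs_left1 by lra.
    assert (arc t - arc s < e) by (apply HL'; lra). lra.
  - pose proof (Hdom t s ltac:(lra) ltac:(lra) ltac:(lra)).
    pose proof (dist_nonneg d Hm (p t) (p s)).
    rewrite Rabs_right in Hst by lra. rewrite Rabs_right by lra. apply HR'; lra.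
Qed.

End ArcLength.

Lemma rectifiable_path_controlled {X : Type} (d : X -> X -> R) (p : R -> X) :
  is_metric d -> continuous_path d p -> Rbar_lt (path_length d p) p_infty ->
  exists lam, controlled d p lam.
Proof.
  intros Hm Hcont Hlen. destruct (path_length_finite d p Hlen) as [L HL].
  exists (arc d p). apply (arc_controls d Hm p L); [|exact Hcont].
  intros l Hl. apply (chain_sum_le_path_length d Hm p L l HL Hl).
Qed.

(** * Lifting controlled paths through F *)

Section Lifting.
Context {X : Type} (d : X -> X -> R) (Hm : is_metric d) (F : X -> X -> Prop) (beta : R)
  (HF : forall x, nonempty_compact d (F x)) (Hbeta : 0 <= beta < 1)
  (Hupc : set_valued_upc d F beta).

Lemma controlled_dist p lam u v : controlled d p lam -> 0 <= u <= 1 -> 0 <= v <= 1 ->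
  d (p u) (p v) <= Rabs (lam v - lam u).
Proof.
  intros [Hdom _] Hu Hv. destruct (Rle_dec u v) as [Huv|Huv].
  - pose proof (Hdom u v ltac:(lra) Huv ltac:(lra)). pose proof (RRle_abs (lam v - lam u)). lra.
  - pose proof (Hdom v u ltac:(lra) ltac:(lra) ltac:(lra)). rewrite (dist_sym d Hm), Rabs_minus_sym.
    pose proof (RRle_abs (lam u - lam v)). lra.
Qed.

Lemma upc_along_controlled p lam c : controlled d p lam -> 0 <= c <= 1 ->
  exists del, 0 < del /\ forall v, 0 <= v <= 1 -> Rabs (v - c) < del ->
    Rbar_le (hausdorff d (F (p c)) (F (p v))) (Finite (beta * d (p c) (p v))).
Proof.
  intros Hc Hc01. destruct (Hupc (p c)) as [N [HNopen [HNc HN]]].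
  destruct (HNopen (p c) HNc) as [r [Hr Hball]].
  destruct (proj2 Hc c Hc01 r Hr) as [del [Hdel Hnear]].
  exists del. split; [exact Hdel|]. intros v Hv Hvc. apply HN, Hball.
  pose proof (controlled_dist p lam c v Hc Hc01 Hv). specialize (Hnear v Hv Hvc). lra.
Qed.

(* Real induction on [s, t]: the set of u for which the bound holds is locally propagated
   in both directions because F is a local contraction along p. *)
Lemma lift_point p lam s t z : controlled d p lam -> 0 <= s -> s <= t -> t <= 1 -> F (p s) z ->
  exists w, F (p t) w /\ d z w <= beta * (lam t - lam s).
Proof.
  intros Hc Hs Hst Ht Hz.
  set (Q := fun u => exists w, F (p u) w /\ d z w <= beta * (lam u - lam s)).
  assert (Hstep : forall a b, s <= a -> a <= b -> b <= 1 -> Q a ->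
     Rbar_le (hausdorff d (F (p a)) (F (p b))) (Finite (beta * d (p a) (p b))) -> Q b).
  { intros a b Ha Hab Hb [w' [Hw' Hzw']] HH.
    destruct (hausdorff_closest d Hm _ _ w' _ (HF (p b)) HH Hw') as [w [Hw Hw'w]].
    exists w. split; [exact Hw|].
    pose proof (proj1 Hc a b ltac:(lra) Hab Hb). pose proof (dist_triangle d Hm z w' w).
    assert (beta * d (p a) (p b) <= beta * (lam b - lam a)) by (apply Rmult_le_compat_l; lra).
    lra. }
  apply (real_induction Q s t Hst).
  - exists z. split; [exact Hz|]. rewrite (dist_refl d Hm). lra.
  - intros c Hc'. destruct (upc_along_controlled p lam c Hc ltac:(lra)) as [del [Hdel Hnear]].
    exists del. split; [exact Hdel|]. intros v Hv Hvc. split.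
    + intros Hcv Qc. apply (Hstep c v); try lra; [exact Qc|]. apply Hnear; [lra | exact Hvc].
    + intros Hvc' Qv. apply (Hstep v c); try lra; [exact Qv|].
      rewrite hausdorff_sym, (dist_sym d Hm). apply Hnear; [lra | exact Hvc].
Qed.

Variables (p : R -> X) (lam : R -> R) (z0 : X).
Hypotheses (Hc : controlled d p lam) (Hz0 : F (p 0) z0).

Lemma grid_lift n : exists g : nat -> X, g 0%nat = z0 /\
  (forall i, (i <= 2 ^ n)%nat -> F (p (dyadic n i)) (g i)) /\
  (forall i j, (i <= j)%nat -> (j <= 2 ^ n)%nat ->
     d (g i) (g j) <= beta * lam (dyadic n j) - beta * lam (dyadic n i)).
Proof.
  destruct (dependent_choice
    (fun i y => (i <= 2 ^ n)%nat -> F (p (dyadic n i)) y)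
    (fun i y y' => (i < 2 ^ n)%nat ->
       d y y' <= beta * lam (dyadic n (S i)) - beta * lam (dyadic n i))
    z0) as [g [Hg0 Hg]].
  - intros _. rewrite dyadic_0. exact Hz0.
  - intros i y Hy. destruct (Compare_dec.lt_dec i (2 ^ n)) as [Hi|Hi].
    + destruct (lift_point p lam (dyadic n i) (dyadic n (S i)) y Hc) as [w [Hw Hyw]];
        [apply dyadic_nonneg | apply dyadic_le; lia | apply dyadic_le_1; lia | apply Hy; lia |].
      exists w. split; [auto | intros _; lra].
    + exists y. split; intros; lia.
  - exists g. split; [exact Hg0 | split].
    + intros i Hi. apply Hg, Hi.
    + apply (dist_telescope d Hm g (fun i => beta * lam (dyadic n i))). intros i Hi. apply Hg, Hi.
Qed.

Lemma grid_lift_everywhere n : exists Z : R -> X, Z 0 = z0 /\ (forall t, F (p t) (Z t)) /\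
  (forall i j, (i <= j)%nat -> (j <= 2 ^ n)%nat ->
     d (Z (dyadic n i)) (Z (dyadic n j)) <= beta * lam (dyadic n j) - beta * lam (dyadic n i)).
Proof.
  destruct (grid_lift n) as [g [Hg0 [Hgin Hgd]]].
  destruct (extend_along_injection (fun i => (i <= 2 ^ n)%nat) (dyadic n) g (fun t => F (p t)))
    as [Z [HZin HZg]].
  - intros t. apply (proj1 (HF (p t))).
  - intros i j _ _. apply dyadic_inj.
  - exact Hgin.
  - exists Z. split; [|split; [exact HZin|]].
    + rewrite <- (dyadic_0 n), HZg; [exact Hg0 | lia].
    + intros i j Hij Hj. rewrite !HZg by lia. apply Hgd; assumption.
Qed.

(* The grid lifts of different levels need not agree; compactness of the values of F and a
   diagonal extraction produce one lift that works on every grid. *)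
Lemma dyadic_lift : exists z : R -> X, z 0 = z0 /\
  (forall M i, (i <= 2 ^ M)%nat -> F (p (dyadic M i)) (z (dyadic M i))) /\
  (forall M i j, (i <= j)%nat -> (j <= 2 ^ M)%nat ->
     d (z (dyadic M i)) (z (dyadic M j)) <= beta * lam (dyadic M j) - beta * lam (dyadic M i)).
Proof.
  destruct (functional_choice (fun n Z => Z 0 = z0 /\ (forall t, F (p t) (Z t)) /\
    forall i j, (i <= j)%nat -> (j <= 2 ^ n)%nat ->
      d (Z (dyadic n i)) (Z (dyadic n j)) <= beta * lam (dyadic n j) - beta * lam (dyadic n i)))
    as [Zs HZs]; [exact grid_lift_everywhere|].
  set (node := fun k => dyadic (fst (Cantor.of_nat k)) (snd (Cantor.of_nat k))).
  destruct (diagonal_subseq d Hm (fun k n => Zs n (node k)) (fun k => F (p (node k))))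
    as [phi [Hphi Hlim]]; [intros k; apply HF | intros k n; apply HZs|].
  set (z := fun t => epsilon (inhabits z0) (converges_to d (fun n => Zs (phi n) t))).
  assert (Hz : forall M i, converges_to d (fun n => Zs (phi n) (dyadic M i)) (z (dyadic M i)) /\
                           F (p (dyadic M i)) (z (dyadic M i))).
  { intros M i. destruct (Hlim (Cantor.to_nat (M, i))) as [l [Hl Hconv]].
    unfold node in Hl, Hconv. rewrite Cantor.cancel_of_to in Hl, Hconv. simpl in Hl, Hconv.
    assert (Hzconv : converges_to d (fun n => Zs (phi n) (dyadic M i)) (z (dyadic M i)))
      by (apply epsilon_spec; exists l; exact Hconv).
    split; [exact Hzconv|]. rewrite <- (limit_unique d Hm _ _ _ Hconv Hzconv). exact Hl. }
  exists z. split; [|split].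
  - rewrite <- (dyadic_0 0). apply (limit_unique d Hm (fun n => Zs (phi n) (dyadic 0 0))).
    + apply Hz.
    + intros e He. exists 0%nat. intros n _.
      rewrite dyadic_0, (proj1 (HZs (phi n))), (dist_refl d Hm).
      exact He.
  - intros M i _. apply Hz.
  - intros M i j Hij Hj. apply (limit_dist_le d Hm _ _ _ _ _ (proj1 (Hz M i)) (proj1 (Hz M j))).
    intros e He. exists M. intros n Hn.
    assert (HM : (M <= phi n)%nat) by (specialize (Hphi n); lia).
    replace (phi n) with (M + (phi n - M))%nat by lia.
    rewrite (dyadic_refine M (phi n - M) i), (dyadic_refine M (phi n - M) j).
    apply Rle_trans with (beta * lam (dyadic (M + (phi n - M)) (j * 2 ^ (phi n - M)))
                          - beta * lam (dyadic (M + (phi n - M)) (i * 2 ^ (phi n - M)))); [|lra].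
    apply HZs; [nia | rewrite Nat.pow_add_r; nia].
Qed.

Hypothesis Hcomplete : complete_metric d.

Lemma lift_path : exists q, controlled d q (fun t => beta * lam t) /\ q 0 = z0 /\ F (p 1) (q 1).
Proof.
  destruct dyadic_lift as [z [Hz0' [Hzin Hzd]]].
  assert (Hmu : continuous_on_unit (fun t => beta * lam t))
    by (apply continuous_on_unit_scale, (proj2 Hc)).
  destruct (dyadic_extension d Hm z (fun t => beta * lam t) Hcomplete Hmu Hzd) as [q [Hqd Hqz]].
  exists q. split; [split; [|exact Hmu]|split].
  - intros u v Hu Huv Hv. eapply Rle_trans; [apply Hqd; lra|].
    pose proof (proj1 Hc u v Hu Huv Hv). pose proof (dist_nonneg d Hm (p u) (p v)).
    rewrite Rabs_right; nra.
  - rewrite <- (dyadic_0 0), Hqz by lia. rewrite dyadic_0. exact Hz0'.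
  - rewrite <- dyadic_0_1, Hqz by (simpl; lia). apply Hzin. simpl. lia.
Qed.

End Lifting.

Section Orbit.
Context {X : Type} (d : X -> X -> R) (Hm : is_metric d) (F : X -> X -> Prop) (beta : R)
  (HF : forall x, nonempty_compact d (F x)) (Hbeta : 0 <= beta < 1)
  (Hupc : set_valued_upc d F beta).

Lemma controlled_orbit p0 lam0 : complete_metric d -> controlled d p0 lam0 -> F (p0 0) (p0 1) ->
  exists x : nat -> X, forall n,
    F (x n) (x (S n)) /\ d (x n) (x (S n)) <= (lam0 1 - lam0 0) * beta ^ n.
Proof.
  intros Hcomplete Hc0 HF0.
  destruct (dependent_choice
    (fun n (s : (R -> X) * (R -> R)) => controlled d (fst s) (snd s) /\ F (fst s 0) (fst s 1) /\
       forall t, snd s t = beta ^ n * lam0 t)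
    (fun _ s s' => fst s' 0 = fst s 1) (p0, lam0)) as [f [_ Hf]].
  - simpl. split; [exact Hc0 | split; [exact HF0 | intros t; ring]].
  - intros n [p lam] [Hc [Hp01 Hlam]]. simpl in *.
    destruct (lift_path d Hm F beta HF Hbeta Hupc p lam (p 1) Hc Hp01 Hcomplete)
      as [q [Hq [Hq0 Hq1]]].
    exists (q, fun t => beta * lam t). simpl. split; [|exact Hq0].
    split; [exact Hq | split; [rewrite Hq0; exact Hq1 | intros t; rewrite Hlam; ring]].
  - exists (fun n => fst (f n) 0). intros n.
    destruct (Hf n) as [[Hc [Hin Hlam]] Hnext]. rewrite Hnext. split; [exact Hin|].
    pose proof (proj1 Hc 0 1 ltac:(lra) ltac:(lra) ltac:(lra)) as Hd. rewrite !Hlam in Hd.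
    replace ((lam0 1 - lam0 0) * beta ^ n) with (beta ^ n * lam0 1 - beta ^ n * lam0 0) by ring.
    exact Hd.
Qed.

Lemma orbit_limit_fixed (x : nat -> X) xs :
  (forall n, F (x n) (x (S n))) -> converges_to d x xs -> F xs xs.
Proof.
  intros Horbit Hxs.
  destruct (Hupc xs) as [N [HNopen [HNxs HN]]].
  destruct (HNopen xs HNxs) as [r [Hr Hball]].
  destruct (compact_closest d Hm (F xs) xs 0 (proj2 (HF xs))) as [w [Hw Hxsw]].
  - intros e He. destruct (Hxs (Rmin r (e / 2))) as [n Hn]; [apply Rmin_glb_lt; lra|].
    pose proof (Rmin_l r (e / 2)). pose proof (Rmin_r r (e / 2)).
    pose proof (Hn n (le_n _)) as Hxn. pose proof (Hn (S n) (le_S _ _ (le_n _))) as HxSn.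
    assert (HH : Rbar_le (hausdorff d (F (x n)) (F xs)) (Finite (beta * d (x n) xs))).
    { rewrite hausdorff_sym, (dist_sym d Hm). apply HN, Hball. rewrite (dist_sym d Hm). lra. }
    destruct (hausdorff_closest d Hm _ _ _ _ (HF xs) HH (Horbit n)) as [w [Hw Hxw]].
    exists w. split; [exact Hw|].
    pose proof (dist_triangle d Hm xs (x (S n)) w) as Htri.
    rewrite (dist_sym d Hm xs (x (S n))) in Htri.
    pose proof (dist_nonneg d Hm (x n) xs).
    assert (beta * d (x n) xs <= d (x n) xs) by nra.
    lra.
  - assert (Hxs_w : xs = w) by (apply (dist_le0 d Hm); lra).
    rewrite Hxs_w at 2. exact Hw.
Qed.

End Orbit.

Theorem proposition14 (X : Type) (d : X -> X -> R) (F : X -> X -> Prop) (beta : R) :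
  is_metric d ->
  inhabited X ->
  complete_metric d ->
  rectifiably_path_connected d ->
  (forall x, nonempty_compact d (F x)) ->
  0 <= beta < 1 ->
  set_valued_upc d F beta ->
  exists x, F x x.
Proof.
  intros Hm [x0] Hcomplete Hrect HF Hbeta Hupc.
  destruct (proj1 (HF x0)) as [x1 Hx1].
  destruct (Hrect x0 x1) as [p [Hp [Hp0 [Hp1 Hlen]]]].
  destruct (rectifiable_path_controlled d p Hm Hp Hlen) as [lam Hlam].
  destruct (controlled_orbit d Hm F beta HF Hbeta Hupc p lam Hcomplete Hlam) as [x Hx];
    [rewrite Hp0, Hp1; exact Hx1|].
  destruct (Hcomplete x) as [xs Hxs].
  { apply (geometric_cauchy d Hm x (lam 1 - lam 0) beta Hbeta). intros n. apply Hx. }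
  exists xs. apply (orbit_limit_fixed d Hm F beta HF Hbeta Hupc x xs); [|exact Hxs].
  intros n. apply Hx.
Qed.
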